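(* Let $A$ be a basic, connected, non-simple finite-dimensional $\Bbbk$-algebra, $B=A^{\mathrm{op}}$, $E=A\otimes_{\Bbbk}B$. In each of the following cases the $E$-module $M={}_AA_A$ (the regular $A$-$A$-bimodule) is indecomposable, has stable endomorphism algebra isomorphic to $\Bbbk$, and is projective both as an $A$-module and as a $B$-module: (i) the center of $A$ is trivial (i.e. equal to $\Bbbk$); (ii) $\mathrm{char}(\Bbbk)\neq2$ and $A=\Bbbk[x]/(x^2)$; (iii) $\mathrm{char}(\Bbbk)\neq 2$ and $A$ is the path algebra of the quiver with vertices $1,2,\dots,n$ and arrows $\alpha:i\to i+1$ and $\beta:i+1\to i$ for $i=1,\dots,n-1$, modulo the relations $\alpha^2=0$, $\beta^2=0$, $\alpha\beta=\beta\alpha$.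
   Context: $\Bbbk$ is an algebraically closed field. $E$-modules are identified with $A$-$A$-bimodules (the right $A$-action corresponding to the left action of $B=A^{\mathrm{op}}$). ''Projective as an $A$-module'' means projective under restriction to $A\otimes 1\subseteq E$ (left $A$-module), and ''projective as a $B$-module'' means projective under restriction to $1\otimes B$ (right $A$-module). The stable endomorphism algebra of an $E$-module $M$ is $\mathrm{End}_E(M)$ modulo the ideal of endomorphisms factoring through a projective $E$-module (i.e. projective $A$-$A$-bimodule). *)

From HB Require Import structures.
From mathcomp Require Import all_boot all_order all_algebra.
From mathcomp Require Import falgebra.
Set Implicit Arguments. Unset Strict Implicit. Unset Printing Implicit Defensive.
Import GRing.Theory.
Local Open Scope ring_scope.

Section Modules.
Variables (k : fieldType) (A : falgType k).

(* E-modules, E = A (x)_k A^op, i.e. A-A-bimodules on which the two induced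
   k-actions agree (k central).  The right A-action is the left action of
   B = A^op. *)
Record bimod := Bimod {
  bm_sort : zmodType;
  bm_l : A -> bm_sort -> bm_sort;
  bm_r : bm_sort -> A -> bm_sort;
  bm_lDr : forall a m n, bm_l a (m + n) = bm_l a m + bm_l a n;
  bm_lDl : forall a b m, bm_l (a + b) m = bm_l a m + bm_l b m;
  bm_lM : forall a b m, bm_l (a * b) m = bm_l a (bm_l b m);
  bm_l1 : forall m, bm_l 1 m = m;
  bm_rDl : forall a m n, bm_r (m + n) a = bm_r m a + bm_r n a;
  bm_rDr : forall a b m, bm_r m (a + b) = bm_r m a + bm_r m b;
  bm_rM : forall a b m, bm_r m (a * b) = bm_r (bm_r m a) b;
  bm_r1 : forall m, bm_r m 1 = m;
  bm_lr : forall a b m, bm_l a (bm_r m b) = bm_r (bm_l a m) b;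
  bm_k : forall (c : k) m, bm_l (c%:A) m = bm_r m (c%:A)
}.

Definition is_bhom (M N : bimod) (f : bm_sort M -> bm_sort N) : Prop :=
  [/\ forall m n, f (m + n) = f m + f n,
      forall a m, f (bm_l a m) = bm_l a (f m) &
      forall a m, f (bm_r m a) = bm_r (f m) a].

Definition bm_projective (P : bimod) : Prop :=
  forall (X Y : bimod) (p : bm_sort X -> bm_sort Y) (g : bm_sort P -> bm_sort Y),
    is_bhom p -> (forall y, exists x, p x = y) -> is_bhom g ->
    exists h : bm_sort P -> bm_sort X, is_bhom h /\ forall m, p (h m) = g m.

(* Endomorphisms factoring through a projective E-module: the ideal
   defining the stable endomorphism algebra. *)
Definition factors_through_proj (M : bimod) (f : bm_sort M -> bm_sort M) : Prop :=
  exists (P : bimod) (g : bm_sort M -> bm_sort P) (h : bm_sort P -> bm_sort M),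
    [/\ bm_projective P, is_bhom g, is_bhom h & forall m, f m = h (g m)].

(* The stable endomorphism algebra  End_E(M) / P(M,M)  is isomorphic to k
   (as a k-algebra), i.e. the structure map k -> End_E(M)/P(M,M),
   c |-> class of c.id_M, is bijective: it is onto, and injective
   (equivalently, id_M does not factor through a projective). *)
Definition stable_end_is_k (M : bimod) : Prop :=
  (forall f : bm_sort M -> bm_sort M, is_bhom f ->
     exists c : k, factors_through_proj (fun m => f m - bm_l (c%:A) m))
  /\ ~ factors_through_proj (fun m : bm_sort M => m).

Definition sub_bimod (M : bimod) (U : bm_sort M -> Prop) : Prop :=
  [/\ U 0, forall m n, U m -> U n -> U (m + n),
      forall a m, U m -> U (bm_l a m) & forall a m, U m -> U (bm_r m a)].

Definition bm_indecomposable (M : bimod) : Prop :=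
  (exists m : bm_sort M, m != 0) /\
  forall U W : bm_sort M -> Prop, sub_bimod U -> sub_bimod W ->
    (forall m, exists u w, [/\ U u, W w & m = u + w]) ->
    (forall m, U m -> W m -> m = 0) ->
    (forall m, U m -> m = 0) \/ (forall m, W m -> m = 0).

(* Left A-modules, and right A-modules (= left B-modules, B = A^op). *)
Record lmodA := LmodA {
  lm_sort : zmodType;
  lm_act : A -> lm_sort -> lm_sort;
  lm_Dr : forall a m n, lm_act a (m + n) = lm_act a m + lm_act a n;
  lm_Dl : forall a b m, lm_act (a + b) m = lm_act a m + lm_act b m;
  lm_M : forall a b m, lm_act (a * b) m = lm_act a (lm_act b m);
  lm_1 : forall m, lm_act 1 m = m
}.

Record rmodA := RmodA {
  rm_sort : zmodType;
  rm_act : rm_sort -> A -> rm_sort;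
  rm_Dl : forall a m n, rm_act (m + n) a = rm_act m a + rm_act n a;
  rm_Dr : forall a b m, rm_act m (a + b) = rm_act m a + rm_act m b;
  rm_M : forall a b m, rm_act m (a * b) = rm_act (rm_act m a) b;
  rm_1 : forall m, rm_act m 1 = m
}.

Definition is_lhom (M N : lmodA) (f : lm_sort M -> lm_sort N) : Prop :=
  (forall m n, f (m + n) = f m + f n) /\ (forall a m, f (lm_act a m) = lm_act a (f m)).

Definition is_rhom (M N : rmodA) (f : rm_sort M -> rm_sort N) : Prop :=
  (forall m n, f (m + n) = f m + f n) /\ (forall a m, f (rm_act m a) = rm_act (f m) a).

Definition lm_projective (P : lmodA) : Prop :=
  forall (X Y : lmodA) (p : lm_sort X -> lm_sort Y) (g : lm_sort P -> lm_sort Y),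
    is_lhom p -> (forall y, exists x, p x = y) -> is_lhom g ->
    exists h : lm_sort P -> lm_sort X, is_lhom h /\ forall m, p (h m) = g m.

Definition rm_projective (P : rmodA) : Prop :=
  forall (X Y : rmodA) (p : rm_sort X -> rm_sort Y) (g : rm_sort P -> rm_sort Y),
    is_rhom p -> (forall y, exists x, p x = y) -> is_rhom g ->
    exists h : rm_sort P -> rm_sort X, is_rhom h /\ forall m, p (h m) = g m.

(* Restriction of an E-module to A (x) 1 and to 1 (x) B. *)
Definition res_A (M : bimod) : lmodA :=
  @LmodA (bm_sort M) (@bm_l M) (@bm_lDr M) (@bm_lDl M) (@bm_lM M) (@bm_l1 M).
Definition res_B (M : bimod) : rmodA :=
  @RmodA (bm_sort M) (@bm_r M) (@bm_rDl M) (@bm_rDr M) (@bm_rM M) (@bm_r1 M).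

Lemma reg_k (c : k) (m : A) : c%:A * m = m * c%:A.
Proof. by rewrite mulr_algl mulr_algr. Qed.

Definition regular_bimod : bimod :=
  @Bimod A (fun a m => a * m) (fun m a => m * a)
    (fun a m n => mulrDr a m n) (fun a b m => mulrDl a b m)
    (fun a b m => esym (mulrA a b m)) (fun m => mul1r m)
    (fun a m n => mulrDl m n a) (fun a b m => mulrDr m a b)
    (fun a b m => mulrA m a b) (fun m => mulr1 m)
    (fun a b m => mulrA a m b) reg_k.

Definition jacobson (x : A) : Prop := forall a : A, (1 - a * x) \is a GRing.unit.

Definition is_alg_hom (R : algType k) (f : A -> R) : Prop :=
  [/\ forall x y, f (x + y) = f x + f y, forall (c : k) x, f (c *: x) = c *: f x,
      forall x y, f (x * y) = f x * f y & f 1 = 1].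

(* A is basic: A / rad A is isomorphic to k x ... x k (n copies), i.e. there is
   a surjective k-algebra map A -> k^n (given coordinatewise) with kernel rad A. *)
Definition basic_alg : Prop :=
  exists (n : nat) (phi : 'I_n -> A -> k),
    [/\ forall i, is_alg_hom (phi i : A -> k^o),
        forall v : 'I_n -> k, exists a, forall i, phi i a = v i &
        forall a, (forall i, phi i a = 0) <-> jacobson a].

Definition connected_alg : Prop :=
  forall e : A, (forall a, e * a = a * e) -> e * e = e -> e = 0 \/ e = 1.

Definition twosided_ideal (I : A -> Prop) : Prop :=
  [/\ I 0, forall x y, I x -> I y -> I (x + y),
      forall a x, I x -> I (a * x) & forall a x, I x -> I (x * a)].

Definition simple_alg : Prop :=
  forall I, twosided_ideal I -> (forall x, I x -> x = 0) \/ I 1.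

(* A = k[x]/(x^2): A is presented by one generator x subject to x^2 = 0. *)
Definition is_dual_numbers : Prop :=
  exists x : A, x * x = 0 /\
    forall (R : algType k) (y : R), y * y = 0 ->
      (exists f : A -> R, is_alg_hom f /\ f x = y) /\
      (forall f g : A -> R, is_alg_hom f -> is_alg_hom g -> f x = y -> g x = y ->
         forall a, f a = g a).

(* Relations of kQ/I in an algebra R, Q the quiver with vertices 0..n-1
   (paper: 1..n) and arrows al_i : i -> i+1, be_i : i+1 -> i (i < n-1):
   e_i complete family of orthogonal idempotents, arrows between the right
   vertices (the convention left/right does not matter, the resulting
   algebra being isomorphic to its opposite), and with al = sum al_i,
   be = sum be_i:  al^2 = 0, be^2 = 0, al be = be al. *)
Definition quiver_rel (n : nat) (R : algType k)
    (e al be : nat -> R) : Prop :=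
  [/\ (forall i j, (i < n)%N -> (j < n)%N -> e i * e j = (if i == j then e i else 0)),
      \sum_(i < n) e i = 1,
      (forall i, (i.+1 < n)%N -> al i = e i.+1 * al i * e i /\ be i = e i * be i * e i.+1) &
      let a := \sum_(i < n.-1) al i in let b := \sum_(i < n.-1) be i in
      [/\ a * a = 0, b * b = 0 & a * b = b * a]].

(* A is (isomorphic to) the path algebra of Q modulo the relations, i.e. A is
   presented by these generators and relations (universal property). *)
Definition is_quiver_alg (n : nat) : Prop :=
  exists e al be : nat -> A, quiver_rel n e al be /\
    forall (R : algType k) (e' al' be' : nat -> R), quiver_rel n e' al' be' ->
      (exists f : A -> R, is_alg_hom f /\
         forall i, [/\ ((i < n)%N -> f (e i) = e' i),
                       ((i.+1 < n)%N -> f (al i) = al' i) &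
                       ((i.+1 < n)%N -> f (be i) = be' i)]) /\
      (forall f g : A -> R, is_alg_hom f -> is_alg_hom g ->
         (forall i, (i < n)%N -> f (e i) = g (e i)) ->
         (forall i, (i.+1 < n)%N -> f (al i) = g (al i) /\ f (be i) = g (be i)) ->
         forall a, f a = g a).

End Modules.

From HB Require Import structures.
From mathcomp Require Import all_boot all_order all_algebra.
From mathcomp Require Import falgebra.
From mathcomp Require Import ring zify.
From Stdlib Require Import Classical.
Set Implicit Arguments. Unset Strict Implicit. Unset Printing Implicit Defensive.
Import GRing.Theory.
Local Open Scope ring_scope.

(* Every bimodule endomorphism [f] of [A] is multiplication by the central
   element [z = f 1], and it factors through the free bimodule [A (x) A^op]
   via [m |-> m T |-> mult (m T)] as soon as [z - c] is the product
   [mult T] of a tensor [T] commuting with [A].  So the surjectivity part of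
   "stable endomorphisms = k" amounts to writing every central element as
   [c + mult T]: in case (i) [z = c]; in case (ii) [z = c + c' x] and
   [T = c'/2 (x (x) 1 + 1 (x) x)]; in case (iii) [z] is [c] plus a
   combination of the socle elements [alpha beta e_i], each of which is
   [mult T] for a commuting tensor built by induction along the quiver.
   If the identity factored through a projective bimodule, [A] would be
   separable; then its radical, a left ideal, would be a direct summand
   generated by an idempotent, hence zero, and a basic connected algebra
   with zero radical is [k], which is simple.  Indecomposability is
   connectedness, and one-sided projectivity holds because [A] is free of
   rank one on either side. *)

Section LinearFun.
Variables (k : fieldType) (V W : lmodType k) (f : V -> W).
Hypothesis lf : linear f.

Lemma linear_fun0 : f 0 = 0.
Proof.
have h := lf 1 0 0; rewrite !scale1r addr0 in h.
by apply: (addrI (f 0)); rewrite addr0 -h.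
Qed.

Lemma linear_funD u v : f (u + v) = f u + f v.
Proof. by have := lf 1 u v; rewrite !scale1r. Qed.

Lemma linear_funZ c u : f (c *: u) = c *: f u.
Proof. by have h := lf c u 0; rewrite linear_fun0 !addr0 in h. Qed.

Lemma linear_fun_sum I (r : seq I) (P : pred I) (c : I -> k) (v : I -> V) :
  f (\sum_(i <- r | P i) c i *: v i) = \sum_(i <- r | P i) c i *: f (v i).
Proof.
elim/big_rec2: _ => [|i x y _ <-]; first exact: linear_fun0.
by rewrite linear_funD linear_funZ.
Qed.

End LinearFun.

Section TensorMatrices.
Variables (k : fieldType) (A : falgType k).
Local Notation d := (\dim (@fullv k A)).

Definition vb : d.-tuple A := vbasis fullv.

Definition coefb (i : 'I_d) (a : A) : k := coord vb i a.

Lemma coefb_expand (a : A) : a = \sum_i coefb i a *: vb`_i.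
Proof. exact: coord_vbasis (memvf a). Qed.

Lemma coefb_vb i (j : 'I_d) : coefb i vb`_j = (j == i)%:R.
Proof. by rewrite /coefb /vb coord_free // (basis_free (vbasisP _)). Qed.

Lemma coefbD i u v : coefb i (u + v) = coefb i u + coefb i v.
Proof. exact: linearD. Qed.

Lemma coefbZ i c u : coefb i (c *: u) = c * coefb i u.
Proof. exact: linearZ. Qed.

Lemma coefb_sum i I (r : seq I) (P : pred I) (c : I -> k) (v : I -> A) :
  coefb i (\sum_(j <- r | P j) c j *: v j) = \sum_(j <- r | P j) c j * coefb i (v j).
Proof. by rewrite /coefb linear_sum; apply: eq_bigr => j _; rewrite linearZ. Qed.

(* An element of [A (x) A^op] is stored as the matrix of its coordinates in
   the basis [vb`_i (x) vb`_j]; the actions of [a (x) 1] and [1 (x) b] then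
   become left multiplication by [lmulmx a] and right multiplication by
   [rmulmx b]. *)
Definition lmulmx (a : A) : 'M[k]_d := \matrix_(p, i) coefb p (a * vb`_i).

Definition rmulmx (b : A) : 'M[k]_d := \matrix_(j, q) coefb q (vb`_j * b).

Definition tensmx (u v : A) : 'M[k]_d := \matrix_(i, j) (coefb i u * coefb j v).

Definition tens_eval (beta : A -> A -> A) (M : 'M[k]_d) : A :=
  \sum_i \sum_j M i j *: beta vb`_i vb`_j.

Definition tens_mul := tens_eval *%R.

Lemma lmulmx_tens a u v : lmulmx a *m tensmx u v = tensmx (a * u) v.
Proof.
apply/matrixP=> p j; rewrite !mxE [u in a * u]coefb_expand mulr_sumr.
under [in RHS]eq_bigr do rewrite -scalerAr.
by rewrite coefb_sum mulr_suml; apply: eq_bigr => i _; rewrite !mxE; ring.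
Qed.

Lemma tens_rmulmx u v b : tensmx u v *m rmulmx b = tensmx u (v * b).
Proof.
apply/matrixP=> i q; rewrite !mxE [v in v * b]coefb_expand mulr_suml.
under [in RHS]eq_bigr do rewrite -scalerAl.
by rewrite coefb_sum mulr_sumr; apply: eq_bigr => j _; rewrite !mxE; ring.
Qed.

Lemma lmulmxM a b : lmulmx (a * b) = lmulmx a *m lmulmx b.
Proof.
apply/matrixP=> p i; rewrite !mxE -mulrA [b * _]coefb_expand mulr_sumr.
under [in LHS]eq_bigr do rewrite -scalerAr.
by rewrite coefb_sum; apply: eq_bigr => q _; rewrite !mxE mulrC.
Qed.

Lemma rmulmxM a b : rmulmx (a * b) = rmulmx a *m rmulmx b.
Proof.
apply/matrixP=> j q; rewrite !mxE mulrA [_ * a]coefb_expand mulr_suml.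
under [in LHS]eq_bigr do rewrite -scalerAl.
by rewrite coefb_sum; apply: eq_bigr => l _; rewrite !mxE.
Qed.

Lemma lmulmx1 : lmulmx 1 = 1%:M.
Proof. by apply/matrixP=> p i; rewrite !mxE mul1r coefb_vb eq_sym. Qed.

Lemma rmulmx1 : rmulmx 1 = 1%:M.
Proof. by apply/matrixP=> p i; rewrite !mxE mulr1 coefb_vb. Qed.

Lemma lmulmxD a b : lmulmx (a + b) = lmulmx a + lmulmx b.
Proof. by apply/matrixP=> p i; rewrite !mxE mulrDl coefbD. Qed.

Lemma rmulmxD a b : rmulmx (a + b) = rmulmx a + rmulmx b.
Proof. by apply/matrixP=> p i; rewrite !mxE mulrDr coefbD. Qed.

Lemma lmulmxZ c a : lmulmx (c *: a) = c *: lmulmx a.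
Proof. by apply/matrixP=> p i; rewrite !mxE -scalerAl coefbZ. Qed.

Lemma rmulmxZ c a : rmulmx (c *: a) = c *: rmulmx a.
Proof. by apply/matrixP=> p i; rewrite !mxE -scalerAr coefbZ. Qed.

Lemma lmulmx0 : lmulmx 0 = 0.
Proof. by rewrite -(scale0r 0) lmulmxZ scale0r. Qed.

Lemma rmulmx0 : rmulmx 0 = 0.
Proof. by rewrite -(scale0r 0) rmulmxZ scale0r. Qed.

Lemma lmulmx_alg c : lmulmx c%:A = c%:M.
Proof. by rewrite lmulmxZ lmulmx1 scalemx1. Qed.

Lemma rmulmx_alg c : rmulmx c%:A = c%:M.
Proof. by rewrite rmulmxZ rmulmx1 scalemx1. Qed.

Lemma tensmxDl u1 u2 v : tensmx (u1 + u2) v = tensmx u1 v + tensmx u2 v.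
Proof. by apply/matrixP=> i j; rewrite !mxE coefbD mulrDl. Qed.

Lemma tensmxZl c u v : tensmx (c *: u) v = c *: tensmx u v.
Proof. by apply/matrixP=> i j; rewrite !mxE coefbZ mulrA. Qed.

Lemma tensmx0l v : tensmx 0 v = 0.
Proof. by apply/matrixP=> i j; rewrite !mxE /coefb linear0 mul0r. Qed.

Lemma tensmx0r u : tensmx u 0 = 0.
Proof. by apply/matrixP=> i j; rewrite !mxE /coefb linear0 mulr0. Qed.

Lemma tensmx_expand (M : 'M[k]_d) : M = \sum_i \sum_j M i j *: tensmx vb`_i vb`_j.
Proof.
rewrite [LHS]matrix_sum_delta; apply: eq_bigr => i _; apply: eq_bigr => j _.
congr (_ *: _); apply/matrixP=> p q.
by rewrite !mxE !coefb_vb -natrM mulnb !(eq_sym p) !(eq_sym q).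
Qed.

Lemma eq_tens_eval (b1 b2 : A -> A -> A) M :
  (forall u v, b1 u v = b2 u v) -> tens_eval b1 M = tens_eval b2 M.
Proof. by move=> h; apply: eq_bigr => i _; apply: eq_bigr => j _; rewrite h. Qed.

Lemma tens_evalD beta M N : tens_eval beta (M + N) = tens_eval beta M + tens_eval beta N.
Proof.
rewrite /tens_eval -big_split; apply: eq_bigr => i _; rewrite -big_split.
by apply: eq_bigr => j _; rewrite !mxE scalerDl.
Qed.

Lemma tens_evalZ beta c M : tens_eval beta (c *: M) = c *: tens_eval beta M.
Proof.
rewrite /tens_eval scaler_sumr; apply: eq_bigr => i _; rewrite scaler_sumr.
by apply: eq_bigr => j _; rewrite !mxE scalerA.
Qed.

Lemma tens_eval_lmul beta a M : (forall v, linear (beta^~ v)) ->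
  tens_eval beta (lmulmx a *m M) = tens_eval (fun u v => beta (a * u) v) M.
Proof.
move=> lb; rewrite /tens_eval.
transitivity (\sum_p \sum_j \sum_i (lmulmx a p i * M i j) *: beta vb`_p vb`_j).
  by apply: eq_bigr => p _; apply: eq_bigr => j _; rewrite !mxE scaler_suml.
transitivity (\sum_i \sum_j \sum_p (lmulmx a p i * M i j) *: beta vb`_p vb`_j).
  under eq_bigr => p _ do rewrite exchange_big.
  by rewrite exchange_big; apply: eq_bigr => i _; exact: exchange_big.
apply: eq_bigr => i _; apply: eq_bigr => j _.
rewrite [a * _]coefb_expand (linear_fun_sum (lb _)) scaler_sumr.
by apply: eq_bigr => p _; rewrite !mxE scalerA mulrC.
Qed.

Lemma tens_eval_rmul beta b M : (forall u, linear (beta u)) ->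
  tens_eval beta (M *m rmulmx b) = tens_eval (fun u v => beta u (v * b)) M.
Proof.
move=> lb; apply: eq_bigr => i _.
transitivity (\sum_q \sum_j (M i j * rmulmx b j q) *: beta vb`_i vb`_q).
  by apply: eq_bigr => q _; rewrite !mxE scaler_suml.
rewrite exchange_big; apply: eq_bigr => j _.
rewrite [_ * b]coefb_expand (linear_fun_sum (lb _)) scaler_sumr.
by apply: eq_bigr => q _; rewrite !mxE scalerA.
Qed.

Lemma tens_eval_tens beta u v :
  (forall v, linear (beta^~ v)) -> (forall u, linear (beta u)) ->
  tens_eval beta (tensmx u v) = beta u v.
Proof.
move=> lb1 lb2; rewrite [in RHS](coefb_expand u) (linear_fun_sum (lb1 _)).
apply: eq_bigr => i _; rewrite [in RHS](coefb_expand v) (linear_fun_sum (lb2 _)).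
by rewrite scaler_sumr; apply: eq_bigr => j _; rewrite !mxE scalerA.
Qed.

Lemma tens_eval_mull (a : A) beta M :
  a * tens_eval beta M = tens_eval (fun u v => a * beta u v) M.
Proof.
rewrite /tens_eval mulr_sumr; apply: eq_bigr => i _; rewrite mulr_sumr.
by apply: eq_bigr => j _; rewrite scalerAr.
Qed.

Lemma tens_eval_mulr (a : A) beta M :
  tens_eval beta M * a = tens_eval (fun u v => beta u v * a) M.
Proof.
rewrite /tens_eval mulr_suml; apply: eq_bigr => i _; rewrite mulr_suml.
by apply: eq_bigr => j _; rewrite scalerAl.
Qed.

Lemma linear_mulr_fixed (x : A) : linear (fun u : A => u * x).
Proof. by move=> c u v; rewrite mulrDl scalerAl. Qed.

Lemma linear_mull_fixed (x : A) : linear (fun u : A => x * u).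
Proof. by move=> c u v; rewrite mulrDr scalerAr. Qed.

Lemma tens_mul_lmul a M : tens_mul (lmulmx a *m M) = a * tens_mul M.
Proof.
rewrite /tens_mul tens_eval_lmul; last exact: linear_mulr_fixed.
by rewrite tens_eval_mull; apply: eq_tens_eval => u v; rewrite mulrA.
Qed.

Lemma tens_mul_rmul b M : tens_mul (M *m rmulmx b) = tens_mul M * b.
Proof.
rewrite /tens_mul tens_eval_rmul; last exact: linear_mull_fixed.
by rewrite tens_eval_mulr; apply: eq_tens_eval => u v; rewrite mulrA.
Qed.

Lemma tens_mul_tens u v : tens_mul (tensmx u v) = u * v.
Proof.
by rewrite /tens_mul tens_eval_tens //; [exact: linear_mulr_fixed | exact: linear_mull_fixed].
Qed.

Lemma tens_mulD M N : tens_mul (M + N) = tens_mul M + tens_mul N.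
Proof. exact: tens_evalD. Qed.

Lemma tens_mulZ c M : tens_mul (c *: M) = c *: tens_mul M.
Proof. exact: tens_evalZ. Qed.

Lemma tens_mul0 : tens_mul 0 = 0.
Proof. by rewrite -(scale0r 0) tens_mulZ scale0r. Qed.

Lemma tens_mulN M : tens_mul (- M) = - tens_mul M.
Proof. by rewrite -scaleN1r tens_mulZ scaleN1r. Qed.

Lemma tens_mul_sum I (r : seq I) (P : pred I) (F : I -> 'M[k]_d) :
  tens_mul (\sum_(i <- r | P i) F i) = \sum_(i <- r | P i) tens_mul (F i).
Proof. by elim/big_rec2: _ => [|i x y _ <-]; rewrite ?tens_mul0 ?tens_mulD. Qed.

End TensorMatrices.

Section BimodSums.
Variables (k : fieldType) (A : falgType k) (X : bimod A).
Local Notation l := (@bm_l _ _ X).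
Local Notation r := (@bm_r _ _ X).

Lemma bm_l0r a : l a 0 = 0.
Proof. by apply: (addrI (l a 0)); rewrite -bm_lDr !addr0. Qed.

Lemma bm_l0l m : l 0 m = 0.
Proof. by apply: (addrI (l 0 m)); rewrite -bm_lDl !addr0. Qed.

Lemma bm_r0l a : r 0 a = 0.
Proof. by apply: (addrI (r 0 a)); rewrite -bm_rDl !addr0. Qed.

Lemma bm_r0r m : r m 0 = 0.
Proof. by apply: (addrI (r m 0)); rewrite -bm_rDr !addr0. Qed.

Lemma bm_l_suml I (s : seq I) (P : pred I) (F : I -> A) m :
  l (\sum_(i <- s | P i) F i) m = \sum_(i <- s | P i) l (F i) m.
Proof. by elim/big_rec2: _ => [|i x y _ <-]; rewrite ?bm_l0l ?bm_lDl. Qed.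

Lemma bm_l_sumr I (s : seq I) (P : pred I) (F : I -> _) a :
  l a (\sum_(i <- s | P i) F i) = \sum_(i <- s | P i) l a (F i).
Proof. by elim/big_rec2: _ => [|i x y _ <-]; rewrite ?bm_l0r ?bm_lDr. Qed.

Lemma bm_r_sumr I (s : seq I) (P : pred I) (F : I -> A) m :
  r m (\sum_(i <- s | P i) F i) = \sum_(i <- s | P i) r m (F i).
Proof. by elim/big_rec2: _ => [|i x y _ <-]; rewrite ?bm_r0r ?bm_rDr. Qed.

Lemma bm_r_suml I (s : seq I) (P : pred I) (F : I -> _) a :
  r (\sum_(i <- s | P i) F i) a = \sum_(i <- s | P i) r (F i) a.
Proof. by elim/big_rec2: _ => [|i x y _ <-]; rewrite ?bm_r0l ?bm_rDl. Qed.

Lemma bm_lZ (c : k) u m : l (c *: u) m = l u (l c%:A m).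
Proof. by rewrite -(mulr_algr c u) bm_lM. Qed.

Lemma bm_rZ (c : k) u m : r m (c *: u) = r (l c%:A m) u.
Proof. by rewrite -(mulr_algl c u) bm_rM bm_k. Qed.

Lemma bhom_sum (Y : bimod A) (f : bm_sort X -> bm_sort Y) : is_bhom f ->
  forall I (s : seq I) (P : pred I) F,
  f (\sum_(i <- s | P i) F i) = \sum_(i <- s | P i) f (F i).
Proof.
case=> fD _ _ I s P F; have f0 : f 0 = 0.
  by apply: (addrI (f 0)); rewrite -fD !addr0.
by elim/big_rec2: _ => [|i x y _ <-]; rewrite ?f0 ?fD.
Qed.

End BimodSums.

Section FreeBimodule.
Variables (k : fieldType) (A : falgType k).
Local Notation d := (\dim (@fullv k A)).
Local Notation vb := (@vb k A).

Definition free_bimod : bimod A :=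
  @Bimod k A 'M[k]_d (fun a M => lmulmx a *m M) (fun M b => M *m rmulmx b)
   (fun a M N => mulmxDr (lmulmx a) M N)
   (fun a b M => etrans (congr1 (mulmx^~ M) (lmulmxD a b)) (mulmxDl _ _ M))
   (fun a b M => etrans (congr1 (mulmx^~ M) (lmulmxM a b)) (esym (mulmxA _ _ M)))
   (fun M => etrans (congr1 (mulmx^~ M) (@lmulmx1 k A)) (mul1mx M))
   (fun a M N => mulmxDl M N (rmulmx a))
   (fun a b M => etrans (congr1 (mulmx M) (rmulmxD a b)) (mulmxDr M _ _))
   (fun a b M => etrans (congr1 (mulmx M) (rmulmxM a b)) (mulmxA M _ _))
   (fun M => etrans (congr1 (mulmx M) (@rmulmx1 k A)) (mulmx1 M))
   (fun a b M => mulmxA (lmulmx a) M (rmulmx b))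
   (fun c M => etrans (congr1 (mulmx^~ M) (@lmulmx_alg k A c))
       (etrans (mul_scalar_mx c M) (etrans (esym (mul_mx_scalar c M))
        (congr1 (mulmx M) (esym (@rmulmx_alg k A c)))))).

Definition mx_colv (M : 'M[k]_d) j : A := \sum_i M i j *: vb`_i.

Lemma mx_colv_lmul a M j : mx_colv (lmulmx a *m M) j = a * mx_colv M j.
Proof.
rewrite /mx_colv mulr_sumr.
transitivity (\sum_p \sum_i (lmulmx a p i * M i j) *: (vb`_p : A)).
  by apply: eq_bigr => p _; rewrite !mxE scaler_suml.
rewrite exchange_big; apply: eq_bigr => i _.
rewrite -scalerAr [a * _]coefb_expand scaler_sumr; apply: eq_bigr => p _.
by rewrite !mxE scalerA mulrC.
Qed.

Lemma mx_colv_rmul b M q : mx_colv (M *m rmulmx b) q = \sum_j rmulmx b j q *: mx_colv M j.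
Proof.
rewrite /mx_colv.
transitivity (\sum_i \sum_j (rmulmx b j q * M i j) *: (vb`_i : A)).
  by apply: eq_bigr => i _; rewrite !mxE scaler_suml; apply: eq_bigr => j _; rewrite mulrC.
rewrite exchange_big; apply: eq_bigr => j _; rewrite scaler_sumr.
by apply: eq_bigr => i _; rewrite scalerA.
Qed.

Lemma mx_colv_expand (M : 'M[k]_d) : M = \sum_j tensmx (mx_colv M j) vb`_j.
Proof.
rewrite [LHS]tensmx_expand exchange_big; apply: eq_bigr => j _; rewrite /mx_colv.
elim/big_rec2: _ => [|i x y _ ->]; first by rewrite tensmx0l.
by rewrite tensmxDl tensmxZl.
Qed.

Lemma tensmx_lr (u v : A) : tensmx u v = lmulmx u *m tensmx 1 1 *m rmulmx v.
Proof. by rewrite lmulmx_tens tens_rmulmx mulr1 mul1r. Qed.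

(* The free bimodule is generated by [1 (x) 1]: a lift of its image
   determines the lifting morphism. *)
Lemma free_bimod_projective : bm_projective free_bimod.
Proof.
move=> X Y p g hp p_onto hg.
have [x0 px0] := p_onto (g (tensmx 1 1)).
pose h (M : 'M[k]_d) := \sum_j bm_l (mx_colv M j) (bm_r x0 vb`_j).
exists h; split; first split.
- move=> M N; rewrite /h -big_split /=; apply: eq_bigr => j _.
  rewrite -bm_lDl; congr bm_l; rewrite /mx_colv -big_split; apply: eq_bigr => i _.
  by rewrite mxE scalerDl.
- move=> a M; rewrite /h /= bm_l_sumr; apply: eq_bigr => j _.
  by rewrite mx_colv_lmul bm_lM.
- move=> b M; rewrite /h /= bm_r_suml.
  under eq_bigr do rewrite mx_colv_rmul bm_l_suml.
  rewrite exchange_big /=; apply: eq_bigr => j _.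
  rewrite -bm_lr -bm_rM [_ * b]coefb_expand bm_r_sumr bm_l_sumr; apply: eq_bigr => q _.
  by rewrite mxE bm_lZ bm_rZ bm_lr.
- move=> M; rewrite /h (bhom_sum hp) [in RHS](mx_colv_expand M) (bhom_sum hg).
  apply: eq_bigr => j _; case: hp => _ hpl hpr; case: hg => _ hgl hgr.
  by rewrite hpl hpr px0 -hgr -hgl /= mulmxA -tensmx_lr.
Qed.

End FreeBimodule.

Section RegularBimodule.
Variables (k : fieldType) (A : falgType k).
Local Notation d := (\dim (@fullv k A)).
Local Notation R := (regular_bimod A).

Lemma regular_lprojective : lm_projective (res_A R).
Proof.
move=> X Y p g [pD pl] p_onto [gD gl].
have [x0 px0] := p_onto (g 1).
exists (fun a : A => lm_act a x0); split; first split.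
- by move=> a b; rewrite /= lm_Dl.
- by move=> a m; rewrite /= lm_M.
- by move=> m; rewrite pl px0 -gl /= mulr1.
Qed.

Lemma regular_rprojective : rm_projective (res_B R).
Proof.
move=> X Y p g [pD pl] p_onto [gD gl].
have [x0 px0] := p_onto (g 1).
exists (fun a : A => rm_act x0 a); split; first split.
- by move=> a b; rewrite /= rm_Dr.
- by move=> a m; rewrite /= rm_M.
- by move=> m; rewrite pl px0 -gl /= mul1r.
Qed.

(* A splitting [A = U + W] into sub-bimodules writes [1 = u + w] with [u] a
   central idempotent. *)
Lemma regular_indecomposable : connected_alg A -> bm_indecomposable R.
Proof.
move=> conn; split; first by exists 1; exact: oner_neq0.
move=> U W [U0 UD Ul Ur] [W0 WD Wl Wr] hsum hcap.
have UN m : U m -> U (- m) by move=> Um; have := Ul (-1) m Um; rewrite /= mulN1r.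
have WN m : W m -> W (- m) by move=> Wm; have := Wl (-1) m Wm; rewrite /= mulN1r.
have uniq u1 u2 w1 w2 : U u1 -> U u2 -> W w1 -> W w2 -> u1 + w1 = u2 + w2 -> u1 = u2.
  move=> U1 U2 W1 W2 e; apply/eqP; rewrite -subr_eq0; apply/eqP/hcap.
    exact: UD (UN _ U2).
  have -> : u1 - u2 = w2 - w1 by rewrite -[u1](addrK w1) e addrC !addrA addNr add0r.
  exact: WD (WN _ W1).
have [u [w [Uu Ww e1]]] := hsum 1.
have uc a : a * u = u * a.
  apply: (uniq (a * u) (u * a) (a * w) (w * a)); [exact: Ul|exact: Ur|exact: Wl|exact: Wr|].
  by rewrite -mulrDr -mulrDl -e1 mulr1 mul1r.
have uw : u * w = 0 by apply: hcap; [exact: Ur | exact: Wl].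
have uu : u * u = u.
  by have := congr1 (fun x => u * x) e1; rewrite /= mulr1 mulrDr uw addr0.
have mul_e1 m : m = m * u + m * w by rewrite -mulrDr -e1 mulr1.
case: (conn u (fun a => esym (uc a)) uu) => [u0|u1].
- left=> m Um; apply: hcap => //; rewrite [m]mul_e1 u0 mulr0 add0r; exact: Wl.
- right=> m Wm; apply: hcap => //.
  have w0 : w = 0 by move: e1; rewrite u1 -{1}[1]addr0 => /addrI /esym.
  rewrite [m]mul_e1 w0 mulr0 addr0; exact: Ul.
Qed.

Lemma regular_bhomE (f : A -> A) : is_bhom (M := R) (N := R) f ->
  (forall m, f m = m * f 1) /\ (forall m, f m = f 1 * m).
Proof.
case=> _ hl hr; split=> m; first by have := hl m 1; rewrite /= mulr1.
by have := hr m 1; rewrite /= mul1r.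
Qed.

Lemma regular_bhom_central (f : A -> A) : is_bhom (M := R) (N := R) f ->
  forall y, y * f 1 = f 1 * y.
Proof. by move=> /regular_bhomE [h1 h2] y; rewrite -h1 -h2. Qed.

Lemma tens_mul_bhom : is_bhom (M := free_bimod A) (N := R) (@tens_mul k A).
Proof.
split; first exact: tens_mulD.
- by move=> a M; rewrite /= tens_mul_lmul.
- by move=> a M; rewrite /= tens_mul_rmul.
Qed.

Definition central_tens (T : 'M[k]_d) := forall a : A, lmulmx a *m T = T *m rmulmx a.

Lemma central_tens0 : central_tens 0.
Proof. by move=> a; rewrite mulmx0 mul0mx. Qed.

Lemma central_tensD M N : central_tens M -> central_tens N -> central_tens (M + N).
Proof. by move=> hM hN y; rewrite mulmxDr mulmxDl hM hN. Qed.

Lemma central_tensZ c M : central_tens M -> central_tens (c *: M).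
Proof. by move=> hM y; rewrite -scalemxAr -scalemxAl hM. Qed.

Lemma central_tensN M : central_tens M -> central_tens (- M).
Proof. by move=> hM; rewrite -scaleN1r; apply: central_tensZ. Qed.

Lemma central_tens_sum I (r : seq I) (P : pred I) (F : I -> 'M[k]_d) :
  (forall i, P i -> central_tens (F i)) -> central_tens (\sum_(i <- r | P i) F i).
Proof.
move=> h; apply: big_rec => [|i x Pi hx]; first exact: central_tens0.
by apply: central_tensD => //; exact: h.
Qed.

Lemma factors_through_free (f : A -> A) (c : k) (T : 'M[k]_d) :
  is_bhom (M := R) (N := R) f -> central_tens T -> tens_mul T = f 1 - c%:A ->
  factors_through_proj (M := R) (fun m => f m - bm_l c%:A m).
Proof.
move=> hf hT mulT.
exists (free_bimod A), (fun m : A => lmulmx m *m T), (@tens_mul k A); split.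
- exact: free_bimod_projective.
- split.
  + by move=> m n; rewrite /= lmulmxD mulmxDl.
  + by move=> a m; rewrite /= lmulmxM mulmxA.
  + by move=> a m; rewrite /= lmulmxM -mulmxA hT mulmxA.
- exact: tens_mul_bhom.
- move=> m /=; rewrite tens_mul_lmul mulT mulrBr reg_k.
  by rewrite [f m](proj1 (regular_bhomE hf)).
Qed.

End RegularBimodule.

Section Separability.
Variables (k : fieldType) (A : falgType k).
Local Notation d := (\dim (@fullv k A)).
Local Notation R := (regular_bimod A).

Lemma tens_mul_onto (y : A) : exists M, tens_mul M = y.
Proof. by exists (tensmx y 1); rewrite tens_mul_tens mulr1. Qed.

Lemma separable_of_id_factors : factors_through_proj (M := R) id ->
  exists e : 'M[k]_d, central_tens e /\ tens_mul e = 1.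
Proof.
move=> [P [g [h [Pproj hg hh gh]]]].
have [H [hH mulH]] :=
  Pproj (free_bimod A) R (@tens_mul k A) h (@tens_mul_bhom k A) tens_mul_onto hh.
exists (H (g 1)); split; last by rewrite mulH -gh.
move=> a; case: hH => _ Hl Hr; case: hg => _ gl gr.
have /= <- : H (g a) = lmulmx a *m H (g 1) by have := gl a 1; rewrite /= mulr1 => ->.
by have /= <- : H (g a) = H (g 1) *m rmulmx a by have := gr a 1; rewrite /= mul1r => ->.
Qed.

(* Averaging a linear projection [pi] against a separability tensor [e]
   turns it into a morphism of left modules. *)
Definition avg_proj (e : 'M[k]_d) (pi : A -> A) (y : A) :=
  tens_eval (fun u v => u * pi (v * y)) e.

Lemma avg_projM e pi : central_tens e -> linear pi ->
  forall a y, avg_proj e pi (a * y) = a * avg_proj e pi y.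
Proof.
move=> ec lpi a y; rewrite /avg_proj tens_eval_mull.
rewrite (@eq_tens_eval _ _ (fun u v => a * (u * pi (v * y))) (fun u v => a * u * pi (v * y)));
  last by move=> u v; rewrite mulrA.
rewrite -(@tens_eval_lmul _ _ (fun u v => u * pi (v * y)) a e); last first.
  by move=> v; exact: linear_mulr_fixed.
rewrite ec tens_eval_rmul; first by apply: eq_tens_eval => u v; rewrite mulrA.
move=> u c v1 v2 /=; rewrite mulrDl -scalerAl (linear_funD lpi) (linear_funZ lpi).
by rewrite mulrDr scalerAr.
Qed.

Lemma avg_proj_id e pi y : tens_mul e = 1 -> (forall v, pi (v * y) = v * y) ->
  avg_proj e pi y = y.
Proof.
move=> e1 piy; rewrite /avg_proj (@eq_tens_eval _ _ _ (fun u v => u * v * y)); last first.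
  by move=> u v; rewrite piy mulrA.
by rewrite -tens_eval_mulr -/(tens_mul e) e1 mul1r.
Qed.

End Separability.

Section BasicRadical.
Variables (k : fieldType) (A : falgType k) (n : nat) (phi : 'I_n -> A -> k).
Hypothesis phi_hom : forall i, is_alg_hom (phi i : A -> k^o).
Hypothesis phi_onto : forall v : 'I_n -> k, exists a, forall i, phi i a = v i.

Definition phi_ker (a : A) := forall i, phi i a = 0.

Lemma phiD i x y : phi i (x + y) = phi i x + phi i y.
Proof. by case: (phi_hom i). Qed.

Lemma phiZ i c x : phi i (c *: x) = c * phi i x.
Proof. by case: (phi_hom i) => _ h _ _; rewrite h. Qed.

Lemma phiM i x y : phi i (x * y) = phi i x * phi i y.
Proof. by case: (phi_hom i). Qed.

Lemma phi1 i : phi i 1 = 1.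
Proof. by case: (phi_hom i). Qed.

Lemma phi0 i : phi i 0 = 0.
Proof. by rewrite -(scale0r 0) phiZ mul0r. Qed.

Lemma phiB i x y : phi i (x - y) = phi i x - phi i y.
Proof. by rewrite phiD -scaleN1r phiZ mulN1r. Qed.

Lemma phi_sum i I (s : seq I) (P : pred I) (F : I -> A) :
  phi i (\sum_(j <- s | P j) F j) = \sum_(j <- s | P j) phi i (F j).
Proof. by elim/big_rec2: _ => [|j x y _ <-]; rewrite ?phi0 ?phiD. Qed.

Lemma phi_ker_sum I (s : seq I) (P : pred I) (F : I -> A) :
  (forall j, P j -> phi_ker (F j)) -> phi_ker (\sum_(j <- s | P j) F j).
Proof.
by move=> h i; rewrite phi_sum big1 // => j /h ->.
Qed.

Lemma phi_delta_lift : exists w : 'I_n -> A, forall i l, phi l (w i) = (l == i)%:R.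
Proof.
have /fin_all_exists [w hw] : forall i, exists a, forall l, phi l a = (l == i)%:R.
  by move=> i; apply: phi_onto.
by exists w.
Qed.

Lemma phi_ker_retraction : exists pi : A -> A,
  [/\ linear pi, forall a, phi_ker (pi a) & forall a, phi_ker a -> pi a = a].
Proof.
have [w hw] := phi_delta_lift.
exists (fun a => a - \sum_i phi i a *: w i); split.
- move=> c u v; under eq_bigr do rewrite phiD phiZ scalerDl -scalerA.
  by rewrite big_split /= -scaler_sumr scalerBr opprD addrACA.
- move=> a l; rewrite phiB phi_sum.
  under eq_bigr do rewrite phiZ hw.
  rewrite (bigD1 l) //= eqxx mulr1 big1 ?addr0 ?subrr // => i /negPf.
  by rewrite eq_sym => ->; rewrite mulr0.
- by move=> a Ja; rewrite big1 ?subr0 // => i _; rewrite Ja scale0r.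
Qed.

(* Separability splits off the radical, a left ideal, as [A j0] with [j0]
   an idempotent in the radical; then [1 - j0] is a unit and [j0 = 0]. *)
Lemma phi_ker0_of_separable (e : 'M[k]_(\dim (@fullv k A))) :
  (forall a, phi_ker a -> jacobson a) -> central_tens e -> tens_mul e = 1 ->
  forall a, phi_ker a -> a = 0.
Proof.
move=> ker_jac ec e1; have [pi [lpi ker_pi pi_id]] := phi_ker_retraction.
pose j0 := avg_proj e pi 1.
have avgE y : avg_proj e pi y = y * j0 by rewrite -{1}[y]mulr1 avg_projM.
have avgJ y : phi_ker y -> avg_proj e pi y = y.
  move=> Jy; apply: avg_proj_id => // v; apply: pi_id => i.
  by rewrite phiM Jy mulr0.
have Jj0 : phi_ker j0.
  apply: phi_ker_sum => i _; apply: phi_ker_sum => j _ l.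
  by rewrite phiZ phiM ker_pi mulr0 mulr0.
have j0K : j0 * j0 = j0 by rewrite -avgE avgJ.
have := ker_jac j0 Jj0 1; rewrite mul1r => j0_unit.
have j00 : j0 = 0 by apply: (mulrI j0_unit); rewrite mulr0 mulrBl mul1r j0K subrr.
by move=> a Ja; rewrite -(avgJ a Ja) avgE j00 mulr0.
Qed.

(* With zero radical, each lift [w i] of the [i]-th coordinate idempotent
   is a central idempotent, so connectedness leaves a single coordinate and
   [A = k]. *)
Lemma simple_of_phi_ker0 : connected_alg A -> (forall a, phi_ker a -> a = 0) ->
  simple_alg A.
Proof.
move=> conn ker0 I [_ _ Il _].
have [w hw] := phi_delta_lift.
have sub0 x y : phi_ker (x - y) -> x = y by move/ker0/eqP; rewrite subr_eq0 => /eqP.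
have w1 i : w i = 1.
  have wc a : w i * a = a * w i by apply: sub0 => l; rewrite phiB !phiM mulrC subrr.
  have wK : w i * w i = w i.
    by apply: sub0 => l; rewrite phiB phiM hw; case: (l == i); rewrite ?mul1r ?mul0r subrr.
  case: (conn (w i) wc wK) => // w0.
  by have := hw i i; rewrite w0 phi0 eqxx => /eqP; rewrite eq_sym oner_eq0.
have single (i l : 'I_n) : l = i.
  have := hw i l; rewrite w1 phi1; case: (eqVneq l i) => // _.
  by move/eqP; rewrite oner_eq0.
case: (classic (exists x, I x /\ x != 0)) => [[x [Ix xn0]]|noI]; last first.
  by left=> x Ix; apply: contra_not_eq (fun xn0 => noI (ex_intro _ x (conj Ix xn0))).
right; have [i phix] : exists i, phi i x != 0.
  apply/existsP; apply: contraT; rewrite negb_exists => /forallP h.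
  by case/eqP: xn0; apply: ker0 => i; apply/eqP; move: (h i); rewrite negbK.
rewrite (_ : 1 = (phi i x)^-1%:A * x); first exact: Il.
apply: sub0 => l; rewrite (single i l) phiB phiM phi1 -[_%:A]mulr1 mulr_algl phiZ phi1.
by rewrite mulr1 mulVf // subrr.
Qed.

End BasicRadical.

Lemma regular_id_not_proj (k : fieldType) (A : falgType k) :
  basic_alg A -> connected_alg A -> ~ simple_alg A ->
  ~ factors_through_proj (M := regular_bimod A) id.
Proof.
move=> [n [phi [phi_hom phi_onto phi_rad]]] conn nsimp /separable_of_id_factors [e [ec e1]].
apply/nsimp/(simple_of_phi_ker0 phi_hom phi_onto conn).
by apply: (phi_ker0_of_separable phi_hom phi_onto _ ec e1) => a /phi_rad.
Qed.

Section CenterTrivialAndDualNumbers.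
Variables (k : fieldType) (A : falgType k).
Local Notation d := (\dim (@fullv k A)).
Local Notation R := (regular_bimod A).

Lemma stable_end_center_trivial : ('Z(fullv : {vspace A}) = 1)%VS ->
  forall f : A -> A, is_bhom (M := R) (N := R) f ->
  exists c : k, factors_through_proj (M := R) (fun m => f m - bm_l c%:A m).
Proof.
move=> Z1 f hf.
have : f 1 \in ('Z(fullv : {vspace A}))%VS.
  rewrite memv_cap memvf /=; by apply/centvP => v _; rewrite (regular_bhom_central hf).
rewrite Z1 => /vlineP [c fc]; exists c.
by apply: (factors_through_free hf (@central_tens0 k A)); rewrite tens_mul0 fc subrr.
Qed.

Lemma vsval_alg_hom (S : {aspace A}) : 1 \in S -> is_alg_hom (fun u : subvs_of S => vsval u).
Proof. by move=> S1; split=> //; apply/eqP; rewrite algid_eq1. Qed.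

Lemma alg_hom_comp (R1 : falgType k) (R2 : algType k) (f : A -> R1) (g : R1 -> R2) :
  is_alg_hom f -> is_alg_hom (A := R1) g -> is_alg_hom (fun a => g (f a)).
Proof.
case=> fD fZ fM f1 [gD gZ gM g1]; split.
- by move=> x y; rewrite fD gD.
- by move=> c x; rewrite fZ gZ.
- by move=> x y; rewrite fM gM.
- by rewrite f1 g1.
Qed.

(* The universal property, applied to the subalgebra generated by [x],
   shows that [x] generates [A]. *)
Lemma dual_numbers_span : is_dual_numbers A ->
  exists x : A, x * x = 0 /\ forall a, a \in (<[1]> + <[x]>)%VS.
Proof.
move=> [x [xx univ]]; exists x; split => //.
pose S := <<(<[x]>)%VS>>%AS.
have xS : x \in S by apply: (subvP (sub_agenv _)); exact: memv_line.
have S1 : 1 \in S by apply: (subvP (sub1_agenv _)); exact: memv_line.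
pose y : subvs_of S := vsproj S x.
have yy : y * y = 0 by apply: val_inj; rewrite /= vsprojK // xx.
have [[F [hF Fx]] _] := univ (subvs_of S) y yy.
have [_ uniq] := univ A x xx.
have SV : (agenv <[x]> <= <[1]> + <[x]>)%VS.
  apply: agenv_sub_modl; first exact: addvSl.
  by rewrite prodvDr !prodv_line mulr1 xx subv_add addvSr /= -memvE mem0v.
have idh : is_alg_hom (fun a : A => a) by [].
move=> a; have := uniq _ _ (alg_hom_comp hF (vsval_alg_hom S1)) idh _ erefl a.
rewrite /= Fx vsprojK // => /(_ erefl) <-.
exact: (subvP SV _ (subvsP (F a))).
Qed.

Lemma stable_end_dual_numbers : ~~ (2 \in [pchar k]) -> is_dual_numbers A ->
  forall f : A -> A, is_bhom (M := R) (N := R) f ->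
  exists c : k, factors_through_proj (M := R) (fun m => f m - bm_l c%:A m).
Proof.
move=> ch2 dual f hf; have [x [xx span]] := dual_numbers_span dual.
have decomp a : exists p q : k, a = p *: 1 + q *: x.
  by have /memv_addP [_ /vlineP [p ->] [_ /vlineP [q ->] ->]] := span a; exists p, q.
have [c [c' fc]] := decomp (f 1).
pose S : 'M[k]_d := tensmx x 1 + tensmx 1 x.
have Sc : central_tens S.
  have Sx : lmulmx x *m S = S *m rmulmx x.
    by rewrite mulmxDr mulmxDl !lmulmx_tens !tens_rmulmx xx mulr1 mul1r tensmx0l tensmx0r
      add0r addr0.
  move=> a; have [p [q ->]] := decomp a.
  rewrite lmulmxD rmulmxD !lmulmxZ !rmulmxZ lmulmx1 rmulmx1 mulmxDl [S *m _]mulmxDr.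
  by rewrite -!scalemxAl -!scalemxAr mul1mx mulmx1 Sx.
exists c; apply: (factors_through_free hf (central_tensZ (c' / 2%:R) Sc)).
rewrite tens_mulZ tens_mulD !tens_mul_tens mulr1 mul1r fc addrAC subrr add0r.
by rewrite -mulr2n -scaler_nat scalerA divfK.
Qed.

End CenterTrivialAndDualNumbers.

Section QuiverRelations.
Variables (k : fieldType) (A : falgType k) (n : nat) (e al be : nat -> A).
Hypothesis hq : quiver_rel n e al be.

Definition qa := \sum_(i < n.-1) al i.

Definition qb := \sum_(i < n.-1) be i.
(* Vertex idempotents extended by [0] beyond [n], so that the commutation
   rules below hold for every index. *)
Definition qe m := if (m < n)%N then e m else 0.

Lemma e_orth i j : (i < n)%N -> (j < n)%N -> e i * e j = (if i == j then e i else 0).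
Proof. by case: hq => h _ _ _; apply: h. Qed.

Lemma qe_sum : \sum_(i < n) qe i = 1.
Proof. by case: hq => _ <- _ _; apply: eq_bigr => i _; rewrite /qe ltn_ord. Qed.

Lemma al_path i : (i.+1 < n)%N -> al i = e i.+1 * al i * e i.
Proof. by case: hq => _ _ h _ => /h [] . Qed.

Lemma be_path i : (i.+1 < n)%N -> be i = e i * be i * e i.+1.
Proof. by case: hq => _ _ h _ => /h [] . Qed.

Lemma qaa : qa * qa = 0. Proof. by case: hq => _ _ _ /= []. Qed.

Lemma qbb : qb * qb = 0. Proof. by case: hq => _ _ _ /= []. Qed.

Lemma qbaC : qb * qa = qa * qb. Proof. by case: hq => _ _ _ /= [_ _ ->]. Qed.

Lemma qeM i j : qe i * qe j = if i == j then qe i else 0.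
Proof.
rewrite /qe; case: (ltnP i n) => hi; case: (ltnP j n) => hj; rewrite ?mul0r ?mulr0.
- by rewrite e_orth.
- by case: eqP => // eij; move: hj; rewrite -eij leqNgt hi.
- by case: eqP => // eij; move: hi; rewrite eij leqNgt hj.
- by case: eqP.
Qed.

Lemma qe_orth i j : i != j -> qe i * qe j = 0.
Proof. by rewrite qeM => /negPf ->. Qed.

Lemma qeK i : qe i * qe i = qe i.
Proof. by rewrite qeM eqxx. Qed.

Lemma ltnS_pred i : (i < n.-1)%N -> (i.+1 < n)%N.
Proof. by move=> h; lia. Qed.

Lemma al_qe i m : (i < n.-1)%N -> al i * qe m = if i == m then al i else 0.
Proof.
move=> hi; have hi1 := ltnS_pred hi.
rewrite (al_path hi1) -mulrA; have -> : e i = qe i by rewrite /qe ltnW.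
by rewrite qeM; case: eqP; rewrite ?mulr0.
Qed.

Lemma qe_al i m : (i < n.-1)%N -> qe m.+1 * al i = if i == m then al i else 0.
Proof.
move=> hi; have hi1 := ltnS_pred hi.
rewrite (al_path hi1) !mulrA; have -> : e i.+1 = qe i.+1 by rewrite /qe hi1.
by rewrite qeM eqSS eq_sym; case: eqP => [->|]; rewrite ?qeK ?mul0r.
Qed.

Lemma qa_qe m : qa * qe m = qe m.+1 * qa.
Proof.
rewrite /qa mulr_suml mulr_sumr; apply: eq_bigr => i _.
by rewrite al_qe // qe_al.
Qed.

Lemma qe0_qa : qe 0 * qa = 0.
Proof.
rewrite /qa mulr_sumr big1 // => i _; have hi1 := ltnS_pred (ltn_ord i).
rewrite (al_path hi1) !mulrA; have -> : e i.+1 = qe i.+1 by rewrite /qe hi1.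
by rewrite qeM /= mul0r mul0r.
Qed.

Lemma be_qe i m : (i < n.-1)%N -> be i * qe m.+1 = if i == m then be i else 0.
Proof.
move=> hi; have hi1 := ltnS_pred hi.
rewrite (be_path hi1) -mulrA; have -> : e i.+1 = qe i.+1 by rewrite /qe hi1.
by rewrite qeM eqSS; case: eqP; rewrite ?mulr0.
Qed.

Lemma qe_be i m : (i < n.-1)%N -> qe m * be i = if i == m then be i else 0.
Proof.
move=> hi; have hi1 := ltnS_pred hi.
rewrite (be_path hi1) !mulrA; have -> : e i = qe i by rewrite /qe ltnW.
by rewrite qeM eq_sym; case: eqP => [->|]; rewrite ?qeK ?mul0r.
Qed.

Lemma qe_qb m : qe m * qb = qb * qe m.+1.
Proof.
rewrite /qb mulr_suml mulr_sumr; apply: eq_bigr => i _.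
by rewrite be_qe // qe_be.
Qed.

Lemma qb_qe0 : qb * qe 0 = 0.
Proof.
rewrite /qb mulr_suml big1 // => i _; have hi1 := ltnS_pred (ltn_ord i).
rewrite (be_path hi1) -!mulrA; have -> : e i.+1 = qe i.+1 by rewrite /qe hi1.
by rewrite qeM /= !mulr0.
Qed.

Lemma qe_qab m : qe m * (qa * qb) = qa * qb * qe m.
Proof.
case: m => [|m]; first by rewrite mulrA qe0_qa mul0r -mulrA qb_qe0 mulr0.
by rewrite -mulrA -qe_qb mulrA -qa_qe mulrA.
Qed.

Lemma al_qa i : (i.+1 < n)%N -> al i = qe i.+1 * qa * qe i.
Proof.
move=> hi; have hi' : (i < n.-1)%N by lia.
rewrite /qa mulr_sumr mulr_suml (bigD1 (Ordinal hi')) //= big1 ?addr0.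
  by rewrite qe_al // eqxx al_qe // eqxx.
move=> j /negPf hj; rewrite qe_al //.
by case: eqP => [ej|]; [ move: hj; rewrite -(inj_eq val_inj) /= ej eqxx | rewrite mul0r].
Qed.

Lemma be_qb i : (i.+1 < n)%N -> be i = qe i * qb * qe i.+1.
Proof.
move=> hi; have hi' : (i < n.-1)%N by lia.
rewrite /qb mulr_sumr mulr_suml (bigD1 (Ordinal hi')) //= big1 ?addr0.
  by rewrite qe_be // eqxx be_qe // eqxx.
move=> j /negPf hj; rewrite qe_be //.
by case: eqP => [ej|]; [ move: hj; rewrite -(inj_eq val_inj) /= ej eqxx | rewrite mul0r].
Qed.

Lemma e_qe i : (i < n)%N -> e i = qe i.
Proof. by move=> hi; rewrite /qe hi. Qed.

End QuiverRelations.

Section VspaceFacts.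
Variables (k : fieldType) (A : falgType k).
Lemma memv_addl (u : A) (U V : {vspace A}) : u \in U -> u \in (U + V)%VS.
Proof. exact: (subvP (addvSl U V)). Qed.

Lemma memv_addr (u : A) (U V : {vspace A}) : u \in V -> u \in (U + V)%VS.
Proof. exact: (subvP (addvSr U V)). Qed.

Lemma prodv_suml (I : finType) (P : pred I) (Us : I -> {vspace A}) V :
  ((\sum_(i | P i) Us i) * V = \sum_(i | P i) (Us i * V))%VS.
Proof. by elim/big_rec2: _ => [|i x y _ <-]; rewrite ?prod0v ?prodvDl. Qed.

Lemma prodv_sumr (I : finType) (P : pred I) (Us : I -> {vspace A}) V :
  (V * (\sum_(i | P i) Us i) = \sum_(i | P i) (V * Us i))%VS.
Proof. by elim/big_rec2: _ => [|i x y _ <-]; rewrite ?prodv0 ?prodvDr. Qed.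
End VspaceFacts.

Section QuiverSpan.
Variables (k : fieldType) (A : falgType k) (n : nat) (e al be : nat -> A).
Hypothesis hq : quiver_rel n e al be.
Local Notation E := (qe n e).
Local Notation a := (qa n al).
Local Notation b := (qb n be).

Definition qspan_at m := (<[E m]> + <[a * E m]> + <[b * E m]> + <[a * b * E m]>)%VS.

Definition qspan := (\sum_(m < n) qspan_at m)%VS.

Definition qgens := (\sum_(m < n) <[E m]> + <[a]> + <[b]>)%VS.

Lemma qe_ge m : (n <= m)%N -> E m = 0.
Proof. by rewrite /qe leqNgt => /negPf ->. Qed.

Lemma qspan_at_sub m x : (m < n)%N -> x \in qspan_at m -> x \in qspan.
Proof.
move=> hm; rewrite memvE => h; rewrite memvE.
exact: (subv_trans h (sumv_sup (Ordinal hm) _ (subvv _))).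
Qed.

Lemma qspan_qe m : E m \in qspan.
Proof.
case: (ltnP m n) => hm; last by rewrite qe_ge // mem0v.
by apply: (qspan_at_sub hm); do 3 apply: memv_addl; exact: memv_line.
Qed.

Lemma qspan_qa m : a * E m \in qspan.
Proof.
case: (ltnP m n) => hm; last by rewrite qe_ge // mulr0 mem0v.
by apply: (qspan_at_sub hm); do 2 apply: memv_addl; apply: memv_addr; exact: memv_line.
Qed.

Lemma qspan_qb m : b * E m \in qspan.
Proof.
case: (ltnP m n) => hm; last by rewrite qe_ge // mulr0 mem0v.
by apply: (qspan_at_sub hm); apply: memv_addl; apply: memv_addr; exact: memv_line.
Qed.

Lemma qspan_qab m : a * b * E m \in qspan.
Proof.
case: (ltnP m n) => hm; last by rewrite qe_ge // mulr0 mem0v.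
by apply: (qspan_at_sub hm); apply: memv_addr; exact: memv_line.
Qed.

Lemma mul_qspan_sub (g : A) :
  (forall m, g * E m \in qspan) -> (forall m, g * (a * E m) \in qspan) ->
  (forall m, g * (b * E m) \in qspan) -> (forall m, g * (a * b * E m) \in qspan) ->
  (<[g]> * qspan <= qspan)%VS.
Proof.
move=> h1 h2 h3 h4; rewrite /qspan prodv_sumr; apply/subv_sumP => m _.
by rewrite /qspan_at !prodvDr !prodv_line !subv_add -!memvE h1 h2 h3 h4.
Qed.

Lemma qgens_mul_qspan : (qgens * qspan <= qspan)%VS.
Proof.
rewrite /qgens !prodvDl !subv_add; apply/andP; split; first (apply/andP; split).
- rewrite prodv_suml; apply/subv_sumP => j _; apply: mul_qspan_sub => m.
  + by rewrite (qeM hq); case: eqP; rewrite ?qspan_qe ?mem0v.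
  + rewrite (qa_qe hq) mulrA (qeM hq); case: eqP => [->|]; last by rewrite mul0r mem0v.
    by rewrite -(qa_qe hq) qspan_qa.
  + case: m => [|m]; first by rewrite (qb_qe0 hq) mulr0 mem0v.
    rewrite -(qe_qb hq) mulrA (qeM hq); case: eqP => [->|]; last by rewrite mul0r mem0v.
    by rewrite (qe_qb hq) qspan_qb.
  + rewrite -(qe_qab hq) mulrA (qeM hq); case: eqP => [->|]; last by rewrite mul0r mem0v.
    by rewrite (qe_qab hq) qspan_qab.
- apply: mul_qspan_sub => m.
  + exact: qspan_qa.
  + by rewrite mulrA (qaa hq) mul0r mem0v.
  + by rewrite mulrA qspan_qab.
  + by rewrite !mulrA (qaa hq) !mul0r mem0v.
- apply: mul_qspan_sub => m.
  + exact: qspan_qb.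
  + by rewrite mulrA (qbaC hq) qspan_qab.
  + by rewrite mulrA (qbb hq) mul0r mem0v.
  + by rewrite !mulrA (qbaC hq) -[a * b * b]mulrA (qbb hq) mulr0 mul0r mem0v.
Qed.

Lemma qspan1 : 1 \in qspan.
Proof. by rewrite -(qe_sum hq); apply: rpred_sum => m _; exact: qspan_qe. Qed.

Lemma agenv_qgens_sub : (agenv qgens <= qspan)%VS.
Proof. by apply: agenv_sub_modl; [rewrite -memvE; exact: qspan1 | exact: qgens_mul_qspan]. Qed.

End QuiverSpan.

Section QuiverSubalgebra.
Variables (k : fieldType) (A : falgType k) (n : nat) (e al be : nat -> A).
Variable (S : {aspace A}).
Hypothesis S1 : 1 \in S.
Hypothesis Se : forall i, (i < n)%N -> e i \in S.
Hypothesis Sal : forall i, (i.+1 < n)%N -> al i \in S.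
Hypothesis Sbe : forall i, (i.+1 < n)%N -> be i \in S.

Lemma quiver_rel_vsproj : quiver_rel n e al be ->
  quiver_rel n (fun i => vsproj S (e i)) (fun i => vsproj S (al i)) (fun i => vsproj S (be i)).
Proof.
case=> eo esum albe /= [aa bb ab]; split.
- move=> i j hi hj; apply: val_inj => /=; rewrite !vsprojK ?Se // eo //.
  by case: eqP => _; rewrite /= ?vsprojK ?Se.
- apply: val_inj; rewrite raddf_sum /= (eqP (_ : algid S == 1)) ?algid_eq1 // -esum.
  by apply: eq_bigr => i _; rewrite /= vsprojK ?Se.
- move=> i hi; have [e1 e2] := albe i hi.
  by split; apply: val_inj; rewrite /= !vsprojK ?Se ?Sal ?Sbe // ltnW.
- have va : vsval (\sum_(i < n.-1) vsproj S (al i)) = \sum_(i < n.-1) al i.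
    by rewrite raddf_sum; apply: eq_bigr => i _; rewrite /= vsprojK // Sal // ltnS_pred.
  have vb : vsval (\sum_(i < n.-1) vsproj S (be i)) = \sum_(i < n.-1) be i.
    by rewrite raddf_sum; apply: eq_bigr => i _; rewrite /= vsprojK // Sbe // ltnS_pred.
  by split; apply: val_inj; rewrite /= ?va ?vb ?aa ?bb ?ab.
Qed.

End QuiverSubalgebra.

(* By the universal property, the subalgebra generated by the [e i],
   [al i], [be i] is all of [A], and it lies in [qspan]. *)
Lemma quiver_alg_span (k : fieldType) (A : falgType k) n : is_quiver_alg A n ->
  exists e al be : nat -> A, quiver_rel n e al be /\ forall x, x \in qspan n e al be.
Proof.
move=> [e [al [be [hq univ]]]]; exists e, al, be; split => // x.
pose S := <<qgens n e al be>>%AS.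
have S1 : 1 \in S by apply: (subvP (sub1_agenv _)); exact: memv_line.
have SU y : y \in qgens n e al be -> y \in S by apply: (subvP (sub_agenv _)).
have SE m : qe n e m \in S.
  apply: SU; rewrite /qgens; do 2 apply: memv_addl.
  case: (ltnP m n) => hm; last by rewrite qe_ge // mem0v.
  by apply: (subvP (sumv_sup (Ordinal hm) _ (subvv _))) => //; exact: memv_line.
have Sa : qa n al \in S by apply: SU; apply: memv_addl; apply: memv_addr; exact: memv_line.
have Sb : qb n be \in S by apply: SU; apply: memv_addr; exact: memv_line.
have Se i : (i < n)%N -> e i \in S by move=> hi; rewrite (e_qe e hi).
have Sal i : (i.+1 < n)%N -> al i \in S by move=> hi; rewrite (al_qa hq hi) !memvM.
have Sbe i : (i.+1 < n)%N -> be i \in S by move=> hi; rewrite (be_qb hq hi) !memvM.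
have [[F [hF Fgen]] _] := univ _ _ _ _ (quiver_rel_vsproj S1 Se Sal Sbe hq).
have [_ uniq] := univ _ _ _ _ hq.
have idh : is_alg_hom (fun y : A => y) by [].
have <- : vsval (F x) = x.
  apply: (uniq _ _ (alg_hom_comp hF (vsval_alg_hom S1)) idh).
  - by move=> i hi; have [h1 _ _] := Fgen i; rewrite /= h1 // vsprojK // Se.
  - by move=> i hi; have [_ h2 h3] := Fgen i; rewrite /= h2 // h3 // !vsprojK ?Sal ?Sbe.
exact: (subvP (agenv_qgens_sub hq) _ (subvsP (F x))).
Qed.

Section QuiverSpanned.
Variables (k : fieldType) (A : falgType k) (n : nat) (e al be : nat -> A).
Hypothesis hq : quiver_rel n e al be.
Hypothesis hspan : forall x, x \in qspan n e al be.
Local Notation E := (qe n e).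
Local Notation a := (qa n al).
Local Notation b := (qb n be).
Local Notation d := (\dim (@fullv k A)).

Lemma qspan_decomp y : exists x1 x2 x3 x4 : 'I_n -> k,
  y = \sum_(m < n) (x1 m *: E m + x2 m *: (a * E m) + x3 m *: (b * E m) + x4 m *: (a * b * E m)).
Proof.
have /memv_sumP [v_ hv ->] := hspan y.
have /fin_all_exists [t ht] : forall m : 'I_n, exists t : k * k * k * k,
    v_ m = t.1.1.1 *: E m + t.1.1.2 *: (a * E m) + t.1.2 *: (b * E m) + t.2 *: (a * b * E m).
  move=> m; have := hv m isT; rewrite /qspan_at.
  move=> /memv_addP [u123 /memv_addP [u12 /memv_addP [u1 /vlineP [p1 ->] [u2 /vlineP [p2 ->] ->]]
    [u3 /vlineP [p3 ->] ->]] [u4 /vlineP [p4 ->] ->]].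
  by exists (p1, p2, p3, p4).
exists (fun m => (t m).1.1.1), (fun m => (t m).1.1.2), (fun m => (t m).1.2), (fun m => (t m).2).
by apply: eq_bigr => m _; rewrite ht.
Qed.

Lemma quiver_ind (P : A -> Prop) : P 0 -> (forall x y, P x -> P y -> P (x + y)) ->
  (forall c x, P x -> P (c *: x)) -> (forall x y, P x -> P y -> P (x * y)) ->
  (forall m, P (E m)) -> P a -> P b -> forall y, P y.
Proof.
move=> P0 PD PZ PM PE Pa Pb y; have [x1 [x2 [x3 [x4 ->]]]] := qspan_decomp y.
apply: big_rec => // m x _ Px; apply: (PD) => //.
by apply: (PD); [apply: (PD); [apply: (PD)|]|]; apply: (PZ) => //; do ?apply: (PM).
Qed.

Lemma central_tens_quiver (T : 'M[k]_d) : (forall m, lmulmx (E m) *m T = T *m rmulmx (E m)) ->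
  lmulmx a *m T = T *m rmulmx a -> lmulmx b *m T = T *m rmulmx b -> central_tens T.
Proof.
move=> hE ha hb; apply: quiver_ind => //.
- by rewrite lmulmx0 rmulmx0 mul0mx mulmx0.
- by move=> x y hx hy; rewrite lmulmxD rmulmxD mulmxDl mulmxDr hx hy.
- by move=> c x hx; rewrite lmulmxZ rmulmxZ -scalemxAl -scalemxAr hx.
- by move=> x y hx hy; rewrite lmulmxM rmulmxM -mulmxA hy mulmxA hx mulmxA.
Qed.

Lemma central_quiver (z : A) : (forall m, E m * z = z * E m) -> a * z = z * a -> b * z = z * b ->
  forall y, y * z = z * y.
Proof.
move=> hE ha hb; apply: quiver_ind => //.
- by rewrite mul0r mulr0.
- by move=> x y hx hy; rewrite mulrDl mulrDr hx hy.
- by move=> c x hx; rewrite -scalerAl -scalerAr hx.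
- by move=> x y hx hy; rewrite -mulrA hy mulrA hx mulrA.
Qed.

Definition qdiag (f : 'I_n -> k) : A := \sum_(m < n) f m *: E m.

Lemma qe_ordM (m l : 'I_n) : E m * E l = if m == l then E m else 0.
Proof. by rewrite (qeM hq) -(inj_eq val_inj). Qed.

Lemma qe_qdiag (l : 'I_n) f : E l * qdiag f = f l *: E l.
Proof.
rewrite /qdiag mulr_sumr (bigD1 l) //= -scalerAr (qeK hq) big1 ?addr0 // => m /negPf hm.
by rewrite -scalerAr qe_ordM eq_sym hm scaler0.
Qed.

Lemma qdiagM f g : qdiag f * qdiag g = qdiag (fun m => f m * g m).
Proof.
rewrite {1}/qdiag mulr_suml /qdiag; apply: eq_bigr => m _.
by rewrite -scalerAl qe_qdiag scalerA.
Qed.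

Lemma eq_qdiag f g : (forall m, f m = g m) -> qdiag f = qdiag g.
Proof. by move=> h; apply: eq_bigr => m _; rewrite h. Qed.

Lemma qdiag1 : qdiag (fun _ => 1) = 1.
Proof. by rewrite /qdiag -(qe_sum hq); apply: eq_bigr => m _; rewrite scale1r. Qed.

Lemma qdiag_cst c : qdiag (fun _ => c) = c%:A.
Proof. by rewrite /qdiag -(qe_sum hq) scaler_sumr. Qed.

Lemma qdiagB f g : qdiag f - qdiag g = qdiag (fun m => f m - g m).
Proof. by rewrite /qdiag -sumrB; apply: eq_bigr => m _; rewrite scalerBl. Qed.

Lemma qdiagZ c f : c *: qdiag f = qdiag (fun m => c * f m).
Proof. by rewrite /qdiag scaler_sumr; apply: eq_bigr => m _; rewrite scalerA. Qed.

Lemma qdiag_prod I (r : seq I) (P : pred I) (F : I -> 'I_n -> k) :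
  \prod_(i <- r | P i) qdiag (F i) = qdiag (fun m => \prod_(i <- r | P i) F i m).
Proof.
elim: r => [|i r IH]; first by rewrite big_nil -qdiag1; apply: eq_qdiag => m; rewrite big_nil.
rewrite big_cons; case Pi: (P i); rewrite IH ?qdiagM;
  by apply: eq_qdiag => m; rewrite big_cons Pi.
Qed.

Definition qdiag_level (x : 'I_n -> k) (v : k) (l : 'I_n) : k := (x l == v)%:R.

(* The indicator of the level set [x = v] is a Lagrange product of the
   [qdiag x - x m], hence central together with [qdiag x]. *)
Lemma central_qdiag_level x v : (forall y, qdiag x * y = y * qdiag x) ->
  forall y, qdiag (qdiag_level x v) * y = y * qdiag (qdiag_level x v).
Proof.
move=> xc; pose F m l := (v - x m)^-1 * (x l - x m).
have -> : qdiag (qdiag_level x v) = \prod_(m < n | x m != v) qdiag (F m).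
  rewrite qdiag_prod; apply: eq_qdiag => l; rewrite /qdiag_level; case: eqP => hl.
    by rewrite big1 // => m hm; rewrite /F hl mulVf // subr_eq0 eq_sym.
  by rewrite (bigD1 l) /=; [rewrite /F subrr mulr0 mul0r | apply/eqP].
move=> y; elim/big_rec: _ => [|m p _ hp]; first by rewrite mul1r mulr1.
have -> : qdiag (F m) = (v - x m)^-1 *: (qdiag x - (x m)%:A).
  by rewrite -qdiag_cst qdiagB qdiagZ.
rewrite -mulrA hp !mulrA; congr (_ * p).
by rewrite -scalerAl -scalerAr mulrBl mulrBr xc mulr_algl mulr_algr.
Qed.

Lemma central_qdiag_scalar (conn : connected_alg A) (x : 'I_n -> k) :
  (forall y, qdiag x * y = y * qdiag x) -> exists c : k, qdiag x = c%:A.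
Proof.
move=> xc.
have [m0 hm0] : exists m0 : 'I_n, E m0 != 0.
  apply/existsP; apply: contraT; rewrite negb_exists => /forallP h.
  have := qe_sum hq; rewrite big1 => [/eqP|m _]; first by rewrite eq_sym oner_eq0.
  by have := h m; rewrite negbK => /eqP.
pose q := qdiag (qdiag_level x (x m0)).
have qK : q * q = q.
  by rewrite qdiagM; apply: eq_qdiag => l; rewrite /qdiag_level; case: eqP; rewrite ?mulr1 ?mulr0.
have qc y : q * y = y * q by rewrite (central_qdiag_level (x m0) xc).
case: (conn q qc qK) => q1.
  have := qe_qdiag m0 (qdiag_level x (x m0)); rewrite -/q q1 mulr0 /qdiag_level eqxx scale1r.
  by move=> h; move: hm0; rewrite -h eqxx.
exists (x m0); rewrite -[qdiag x]mulr1 -q1 qdiagM.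
transitivity (x m0 *: q); last by rewrite q1.
rewrite qdiagZ; apply: eq_qdiag => l; rewrite /qdiag_level.
by case: eqP => [->|]; rewrite ?mulr0.
Qed.

Local Notation soc i := (a * b * E i).

Lemma qsoc0 : soc 0 = 0.
Proof. by rewrite -mulrA (qb_qe0 hq) mulr0. Qed.

Lemma qsoc_qa i : soc i * a = 0.
Proof.
case: i => [|i]; first by rewrite -mulrA (qe0_qa hq) mulr0.
by rewrite -mulrA -(qa_qe hq) -mulrA [b * _]mulrA (qbaC hq) !mulrA (qaa hq) !mul0r.
Qed.

Lemma qsoc_qb i : soc i * b = 0.
Proof.
by rewrite -mulrA (qe_qb hq) -[a * b * _]mulrA [b * (b * _)]mulrA (qbb hq) mul0r !mulr0.
Qed.

Lemma qa_qsoc i : a * soc i = 0.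
Proof. by rewrite !mulrA (qaa hq) !mul0r. Qed.

Lemma qb_qsoc i : b * soc i = 0.
Proof. by rewrite !mulrA (qbaC hq) -[a * b * b]mulrA (qbb hq) mulr0 !mul0r. Qed.

Lemma qe_qsoc i : E i * soc i = soc i.
Proof. by rewrite mulrA (qe_qab hq) -mulrA (qeK hq). Qed.

Lemma qsoc_qe i : soc i * E i = soc i.
Proof. by rewrite -mulrA (qeK hq). Qed.

Lemma qe_qsocC j m : E j * soc m = soc m * E j.
Proof.
rewrite mulrA (qe_qab hq) -!mulrA !(qeM hq).
by case: (eqVneq j m) => [->|ne]; rewrite ?eqxx // eq_sym (negPf ne).
Qed.

Lemma qe_tens_commute (u v : A) p m : E p * u = u -> v * E p = v ->
  lmulmx (E m) *m tensmx u v = tensmx u v *m rmulmx (E m).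
Proof.
move=> hu hv; rewrite lmulmx_tens tens_rmulmx.
have -> : E m * u = (E m * E p) * u by rewrite -mulrA hu.
have -> : v * E m = v * (E p * E m) by rewrite mulrA hv.
case: (eqVneq m p) => [->|ne]; first by rewrite (qeK hq) hu hv.
by rewrite !(qe_orth hq) // ?mul0r ?mulr0 ?tensmx0l ?tensmx0r // eq_sym.
Qed.

Definition qsoc_tens i : 'M[k]_d :=
  tensmx (soc i) (E i) + tensmx (E i) (soc i)
  + tensmx (a * E i) (E i * b) + tensmx (b * E i) (E i * a).

Lemma qsoc_tens_central i : central_tens (qsoc_tens i).
Proof.
apply: central_tens_quiver.
- move=> m; rewrite /qsoc_tens !mulmxDr !mulmxDl.
  congr (_ + _ + _ + _).
  + by apply: (qe_tens_commute (p := i)); [exact: qe_qsoc | exact: (qeK hq)].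
  + by apply: (qe_tens_commute (p := i)); [exact: (qeK hq) | exact: qsoc_qe].
  + apply: (qe_tens_commute (p := i.+1)).
      by rewrite (qa_qe hq) mulrA (qeK hq).
    by rewrite (qe_qb hq) -mulrA (qeK hq).
  + case: i => [|i]; first by rewrite (qb_qe0 hq) tensmx0l mulmx0 mul0mx.
    apply: (qe_tens_commute (p := i)).
      by rewrite -(qe_qb hq) mulrA (qeK hq).
    by rewrite -mulrA (qa_qe hq) mulrA (qeK hq).
- rewrite /qsoc_tens !mulmxDr !mulmxDl !lmulmx_tens !tens_rmulmx.
  rewrite qa_qsoc qsoc_qa [a * (a * _)]mulrA (qaa hq) mul0r [a * (b * _)]mulrA.
  rewrite -[E i * b * a]mulrA (qbaC hq) (qe_qab hq) -[E i * a * a]mulrA (qaa hq) mulr0.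
  by rewrite !tensmx0l !tensmx0r !addr0 add0r addrC.
- rewrite /qsoc_tens !mulmxDr !mulmxDl !lmulmx_tens !tens_rmulmx.
  rewrite qb_qsoc qsoc_qb [b * (b * _)]mulrA (qbb hq) mul0r [b * (a * _)]mulrA (qbaC hq).
  rewrite -[E i * b * b]mulrA (qbb hq) mulr0 -[E i * a * b]mulrA (qe_qab hq).
  by rewrite !tensmx0l !tensmx0r !addr0 add0r addrC.
Qed.

Lemma tens_mul_qsoc_tens i :
  tens_mul (qsoc_tens i) = soc i + soc i + soc i.+1 + (if i is i'.+1 then soc i' else 0).
Proof.
rewrite /qsoc_tens !tens_mulD !tens_mul_tens qsoc_qe qe_qsoc.
have h3 : a * E i * (E i * b) = soc i.+1.
  by rewrite mulrA -[a * E i * E i]mulrA (qeK hq) -[a * E i * b]mulrA (qe_qb hq) mulrA.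
have h4 : b * E i * (E i * a) = if i is i'.+1 then soc i' else 0.
  rewrite mulrA -[b * E i * E i]mulrA (qeK hq) -[b * E i * a]mulrA.
  case: i {h3} => [|i]; first by rewrite (qe0_qa hq) mulr0.
  by rewrite -(qa_qe hq) mulrA (qbaC hq).
by rewrite h3 h4.
Qed.

(* Since [soc 0 = 0], [tens_mul_qsoc_tens] yields [soc i.+2] from
   [soc i.+1], [soc i] and a commuting tensor, without dividing by 2. *)
Lemma qsoc_tens_mul i : exists T : 'M[k]_d, central_tens T /\ tens_mul T = soc i.
Proof.
suff [] : (exists T : 'M[k]_d, central_tens T /\ tens_mul T = soc i) /\
          (exists T : 'M[k]_d, central_tens T /\ tens_mul T = soc i.+1) by [].
elim: i => [|i [[T1 [c1 m1]] [T2 [c2 m2]]]].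
  split; first by exists 0; rewrite tens_mul0 qsoc0; split; first exact: central_tens0.
  exists (qsoc_tens 0); split; first exact: qsoc_tens_central.
  by rewrite tens_mul_qsoc_tens qsoc0 !add0r addr0.
split; first by exists T2.
exists (qsoc_tens i.+1 - (T2 + T2) - T1); split.
  apply: central_tensD; last exact: central_tensN.
  by apply: central_tensD; [exact: qsoc_tens_central | apply/central_tensN/central_tensD].
have := tens_mul_qsoc_tens i.+1; move: (qsoc_tens i.+1) => t mt.
rewrite !tens_mulD !tens_mulN tens_mulD mt m1 m2 /=.
move: (soc i.+1) (soc i.+2) (soc i) => X Y Z.
by rewrite [X + X + Y]addrC [Y + (X + X) + Z]addrAC !addrK.
Qed.

Lemma qsoc_comb_tens_mul (x : 'I_n -> k) :
  exists T : 'M[k]_d, central_tens T /\ tens_mul T = \sum_m x m *: soc m.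
Proof.
have /fin_all_exists [T hT] : forall m : 'I_n,
    exists T : 'M[k]_d, central_tens T /\ tens_mul T = soc m by move=> m; exact: qsoc_tens_mul.
exists (\sum_m x m *: T m); split.
  by apply: central_tens_sum => m _; apply: central_tensZ; case: (hT m).
by rewrite tens_mul_sum; apply: eq_bigr => m _; rewrite tens_mulZ; case: (hT m) => _ ->.
Qed.

Lemma central_qsoc_comb (x : 'I_n -> k) :
  forall y, y * (\sum_m x m *: soc m) = (\sum_m x m *: soc m) * y.
Proof.
have hr g : (forall m, g * soc m = soc m * g) ->
    g * (\sum_m x m *: soc m) = (\sum_m x m *: soc m) * g.
  move=> h; apply: (big_ind (fun r => g * r = r * g)) => [|r s hr hs|m _].
  - by rewrite mulr0 mul0r.
  - by rewrite mulrDr mulrDl hr hs.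
  - by rewrite -scalerAr -scalerAl h.
apply: central_quiver.
- by move=> m; apply: hr => j; exact: qe_qsocC.
- by apply: hr => j; rewrite qa_qsoc qsoc_qa.
- by apply: hr => j; rewrite qb_qsoc qsoc_qb.
Qed.

Definition qdiag_part (y : A) := \sum_(l < n) E l * y * E l.

Lemma qdiag_part_linear : linear qdiag_part.
Proof.
move=> x u v; rewrite /qdiag_part scaler_sumr -big_split; apply: eq_bigr => l _ /=.
by rewrite mulrDr mulrDl -scalerAr -scalerAl.
Qed.

Lemma qdiag_part_sum (F : 'I_n -> A) : qdiag_part (\sum_m F m) = \sum_m qdiag_part (F m).
Proof.
by elim/big_rec2: _ => [|i x y _ <-];
  rewrite ?(linear_fun0 qdiag_part_linear) ?(linear_funD qdiag_part_linear).
Qed.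

Lemma qdiag_part_qe (m : 'I_n) : qdiag_part (E m) = E m.
Proof.
rewrite /qdiag_part (bigD1 m) //= (qeK hq) (qeK hq) big1 ?addr0 // => l hl.
by rewrite qe_ordM (negPf hl) mul0r.
Qed.

Lemma qdiag_part_qa m : qdiag_part (a * E m) = 0.
Proof.
rewrite /qdiag_part big1 // => l _; move: (nat_of_ord l) => j.
rewrite -!mulrA (qeM hq); case: eqP => [->|]; last by rewrite !mulr0.
by rewrite (qa_qe hq) mulrA (qeM hq) (ltn_eqF (ltnSn _)) mul0r.
Qed.

Lemma qdiag_part_qb m : qdiag_part (b * E m) = 0.
Proof.
rewrite /qdiag_part big1 // => l _; move: (nat_of_ord l) => j.
rewrite -!mulrA (qeM hq); case: eqP => [->|]; last by rewrite !mulr0.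
case: j => [|j]; first by rewrite (qb_qe0 hq) mulr0.
by rewrite -(qe_qb hq) mulrA (qeM hq) eq_sym (ltn_eqF (ltnSn _)) mul0r.
Qed.

Lemma qdiag_part_qsoc (m : 'I_n) : qdiag_part (soc m) = soc m.
Proof.
rewrite /qdiag_part (bigD1 m) //= qe_qsoc qsoc_qe big1 ?addr0 // => l hl.
by rewrite qe_qsocC -mulrA (qeK hq) -mulrA qe_ordM eq_sym (negPf hl) mulr0.
Qed.

Lemma qdiag_part_central z : (forall y, y * z = z * y) -> qdiag_part z = z.
Proof.
move=> zc; rewrite /qdiag_part.
transitivity (\sum_(l < n) z * E l).
  by apply: eq_bigr => l _; rewrite zc -mulrA (qeK hq).
by rewrite -mulr_sumr (qe_sum hq) mulr1.
Qed.

(* The diagonal part [\sum_l e_l y e_l] fixes a central [z]; on the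
   decomposition of [z] it kills the arrow components. *)
Lemma central_quiver_decomp z : (forall y, y * z = z * y) ->
  exists x1 x4 : 'I_n -> k, z = qdiag x1 + \sum_m x4 m *: soc m.
Proof.
move=> zc; have [x1 [x2 [x3 [x4 hz]]]] := qspan_decomp z.
exists x1, x4; rewrite -(qdiag_part_central zc) hz qdiag_part_sum /qdiag -big_split /=.
apply: eq_bigr => m _; rewrite !(linear_funD qdiag_part_linear) !(linear_funZ qdiag_part_linear).
by rewrite qdiag_part_qe qdiag_part_qa qdiag_part_qb qdiag_part_qsoc !scaler0 !addr0.
Qed.

End QuiverSpanned.

Lemma stable_end_quiver (k : fieldType) (A : falgType k) n :
  connected_alg A -> is_quiver_alg A n ->
  forall f : A -> A, is_bhom (M := regular_bimod A) (N := regular_bimod A) f ->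
  exists c : k, factors_through_proj (M := regular_bimod A) (fun m => f m - bm_l c%:A m).
Proof.
move=> conn /quiver_alg_span [e [al [be [hq hspan]]]] f hf.
have [x1 [x4 fE]] := central_quiver_decomp hq hspan (regular_bhom_central hf).
have rc := central_qsoc_comb hq hspan x4.
have [c hc] : exists c : k, qdiag e x1 = c%:A.
  apply: (central_qdiag_scalar hq conn) => y.
  have -> : qdiag e x1 = f 1 - \sum_m x4 m *: (qa n al * qb n be * qe n e m) by rewrite fE addrK.
  by rewrite mulrBl mulrBr -(regular_bhom_central hf) rc.
have [T [Tc mulT]] := qsoc_comb_tens_mul hq hspan x4.
exists c; apply: (factors_through_free hf Tc).
by rewrite mulT fE hc addrAC subrr add0r.
Qed.

Theorem lemma29 (k : closedFieldType) (A : falgType k) :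
  basic_alg A -> connected_alg A -> ~ simple_alg A ->
  [\/ ('Z(fullv : {vspace A}) = 1)%VS,
      ~~ (2 \in [pchar k]) /\ is_dual_numbers A
    | ~~ (2 \in [pchar k]) /\ exists n : nat, is_quiver_alg A n] ->
  [/\ bm_indecomposable (regular_bimod A),
      stable_end_is_k (regular_bimod A),
      lm_projective (res_A (regular_bimod A)) &
      rm_projective (res_B (regular_bimod A))].
Proof.
move=> basic conn nsimp cases; split.
- exact: regular_indecomposable.
- split; last exact: regular_id_not_proj.
  case: cases => [Z1|[ch2 dual]|[_ [n quiv]]].
  + exact: stable_end_center_trivial.
  + exact: stable_end_dual_numbers.
  + exact: stable_end_quiver quiv.
- exact: regular_lprojective.
- exact: regular_rprojective.
Qed.
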